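(* Let $w$ be an infinite word and let $n_0<n_1<n_2$ be three consecutive lengths of palindromic prefixes of $w$ (no palindromic prefix of $w$ has length strictly between $n_0$ and $n_1$ or between $n_1$ and $n_2$), with corresponding prefixes $\pi_0,\pi_1,\pi_2$. Write $\pi_1=\pi_0b$. Then either $\pi_2=\pi_1b$ (i.e. $\pi_2=\pi_1\pi_0^{-1}\pi_1$), or $n_2>n_0+n_1$.
   Context: Infinite words are right-infinite; a finite word is a palindrome if it equals its reversal, the empty word being a palindrome. *)

From mathcomp Require Import all_boot.
Set Implicit Arguments. Unset Strict Implicit. Unset Printing Implicit Defensive.

Definition infword (A : Type) := nat -> A.

Definition pref (A : Type) (w : infword A) (n : nat) : seq A := mkseq w n.

Definition palindrome (A : Type) (s : seq A) : Prop := rev s = s.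

(* If n2 <= n0 + n1, the gaps d = n2 - n1 and e = n1 - n0 must coincide.
   Two nested palindromic prefixes of lengths m <= n give the longer one the
   period n - m, and a palindrome with period p has a palindromic prefix of
   length n - p.  If d < e, the period d of pi2 restricts to pi1 and yields a
   palindromic prefix of length n1 - d strictly between n0 and n1.  If d > e,
   then pi1 (period e) is a suffix of pi2 overlapping its prefix of length d,
   which spreads the period e over all of pi2 and yields a palindromic prefix
   of length n2 - e strictly between n1 and n2.  With d = e, the period d of
   pi2 says precisely pi2 = pi1 b. *)

From mathcomp Require Import all_boot zify.
Set Implicit Arguments. Unset Strict Implicit. Unset Printing Implicit Defensive.

Section PrefixCombinatorics.
Variables (A : Type) (w : infword A).

Definition pal_pref (n : nat) : Prop := forall i, i < n -> w i = w (n.-1 - i).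

Definition period_pref (n p : nat) : Prop := forall i, i + p < n -> w i = w (i + p).

Lemma palindrome_prefP n : palindrome (pref w n) <-> pal_pref n.
Proof.
split=> [palw i lt_in | palw].
- have := congr1 (nth (w 0) ^~ (n.-1 - i)) palw.
  rewrite nth_rev /pref size_mkseq; last by lia.
  by rewrite !nth_mkseq; [have -> : n - (n.-1 - i).+1 = i by lia | lia | lia].
- apply: (@eq_from_nth _ (w 0)); rewrite size_rev // /pref size_mkseq => i lt_in.
  rewrite nth_rev size_mkseq // !nth_mkseq; try lia.
  by rewrite palw //; f_equal; lia.
Qed.

Lemma period_pref_le m n p : m <= n -> period_pref n p -> period_pref m p.
Proof. by move=> le_mn pern i lt_ipm; apply: pern; lia. Qed.

Lemma pal_pref_period m n : m <= n -> pal_pref m -> pal_pref n -> period_pref n (n - m).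
Proof.
move=> le_mn palm paln i lt_in.
rewrite (paln (i + (n - m))); last by lia.
by rewrite palm; [f_equal | ]; lia.
Qed.

Lemma period_pal_pref n p : p <= n -> pal_pref n -> period_pref n p -> pal_pref (n - p).
Proof.
move=> le_pn paln pern i lt_i.
rewrite paln; last by lia.
by rewrite (pern ((n - p).-1 - i)); [f_equal | ]; lia.
Qed.

(* The prefix of length n has period d, so its letters from position d on
   repeat its prefix of length m, which has period q. *)
Lemma period_pref_glue n m d q :
  n <= m + d -> q + d <= m -> period_pref n d -> period_pref m q -> period_pref n q.
Proof.
move=> le_n le_qd pern perm i lt_iq.
have [lt_id | le_di] := ltnP i d; first by apply: perm; lia.
have shift j : j < n -> d <= j -> w j = w (j - d).
  by move=> lt_jn le_dj; rewrite (pern (j - d)) ?subnK; try lia.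
rewrite shift ?(shift (i + q)); try lia.
by rewrite (perm (i - d)); [f_equal | ]; lia.
Qed.

Lemma pref_add m k : pref w (m + k) = pref w m ++ [seq w i | i <- iota m k].
Proof. by rewrite /pref /mkseq iotaD map_cat. Qed.

Lemma drop_pref j m : drop j (pref w m) = [seq w i | i <- iota j (m - j)].
Proof. by rewrite /pref /mkseq -map_drop drop_iota. Qed.

Lemma pref_repeat j m :
  j <= m -> period_pref (m + (m - j)) (m - j) ->
  pref w (m + (m - j)) = pref w m ++ drop j (pref w m).
Proof.
move=> le_jm per; rewrite pref_add drop_pref; congr (_ ++ _).
rewrite -[in iota m](subnK le_jm) iotaDl -map_comp.
apply/eq_in_map => i; rewrite mem_iota => /andP[le_ji lt_i] /=.
by rewrite addnC -per //; lia.
Qed.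

End PrefixCombinatorics.

Section ConsecutivePalindromicPrefixes.
Variables (A : Type) (w : infword A) (n0 n1 n2 : nat).
Hypotheses (lt01 : n0 < n1) (lt12 : n1 < n2).
Hypotheses (pal0 : pal_pref w n0) (pal1 : pal_pref w n1) (pal2 : pal_pref w n2).
Hypothesis gap01 : forall m, n0 < m < n1 -> ~ pal_pref w m.
Hypothesis gap12 : forall m, n1 < m < n2 -> ~ pal_pref w m.

Let per1 : period_pref w n1 (n1 - n0).
Proof. exact: pal_pref_period (ltnW lt01) pal0 pal1. Qed.

Let per2 : period_pref w n2 (n2 - n1).
Proof. exact: pal_pref_period (ltnW lt12) pal1 pal2. Qed.

Lemma pal_gap_leq : n1 - n0 <= n2 - n1.
Proof.
rewrite leqNgt; apply/negP => lt_gap.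
have pal_mid : pal_pref w (n1 - (n2 - n1)).
  by apply: period_pal_pref pal1 (period_pref_le (ltnW lt12) per2); lia.
have mid : n0 < n1 - (n2 - n1) < n1 by lia.
exact: gap01 mid pal_mid.
Qed.

Lemma pal_gap_geq : n2 <= n0 + n1 -> n2 - n1 <= n1 - n0.
Proof.
move=> short; rewrite leqNgt; apply/negP => lt_gap.
have per2' : period_pref w n2 (n1 - n0) by apply: period_pref_glue per2 per1; lia.
have pal_mid : pal_pref w (n2 - (n1 - n0)) by apply: period_pal_pref pal2 per2'; lia.
have mid : n1 < n2 - (n1 - n0) < n2 by lia.
exact: gap12 mid pal_mid.
Qed.

Lemma consecutive_pal_gaps : n2 <= n0 + n1 -> n2 = n1 + (n1 - n0).
Proof. by move=> short; have := pal_gap_leq; have := pal_gap_geq short; lia. Qed.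

End ConsecutivePalindromicPrefixes.

Theorem lemma5p5 (A : Type) (w : infword A) (n0 n1 n2 : nat) :
  n0 < n1 -> n1 < n2 ->
  palindrome (pref w n0) -> palindrome (pref w n1) -> palindrome (pref w n2) ->
  (forall m, n0 < m < n1 -> ~ palindrome (pref w m)) ->
  (forall m, n1 < m < n2 -> ~ palindrome (pref w m)) ->
  let b := drop n0 (pref w n1) in
  pref w n2 = pref w n1 ++ b \/ n0 + n1 < n2.
Proof.
move=> lt01 lt12 /palindrome_prefP pal0 /palindrome_prefP pal1 /palindrome_prefP pal2.
move=> gap01 gap12 b; have [_ | short] := ltnP (n0 + n1) n2; [by right | left].
have nopal01 m : n0 < m < n1 -> ~ pal_pref w m by move=> /gap01 + /palindrome_prefP.
have nopal12 m : n1 < m < n2 -> ~ pal_pref w m by move=> /gap12 + /palindrome_prefP.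
have n2E := consecutive_pal_gaps lt01 lt12 pal0 pal1 pal2 nopal01 nopal12 short.
have per2 := pal_pref_period (ltnW lt12) pal1 pal2.
rewrite n2E addKn in per2.
by rewrite n2E /b pref_repeat // ltnW.
Qed.
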